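(* Let $n\geq1$ and let $a_1,\ldots,a_n$ be positive real numbers. Let $A\subset\mathbb{R}^n$ be the ray emanating from $0$ and passing through $(a_1,\ldots,a_n)$. Then there exists an infinite sequence of points $x_1,x_2,\ldots$ in $\mathbb{Z}^n$ such that $x_1$ is a standard coordinate vector, $x_{i+1}-x_i$ is a standard coordinate vector for every $i$, and each $x_i$ is within Euclidean distance $\sqrt{2n}$ of $A$.
   Context: A standard coordinate vector is one of the standard basis vectors $e_1,\ldots,e_n$ of $\mathbb{R}^n$. *)

From mathcomp Require Import all_boot all_order all_algebra.
From mathcomp Require Import reals.
Set Implicit Arguments. Unset Strict Implicit. Unset Printing Implicit Defensive.
Import Order.TTheory GRing.Theory Num.Theory.
Local Open Scope ring_scope.

Definition is_std_basis (n : nat) (x : 'rV[int]_n) : Prop :=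
  exists j : 'I_n, x = delta_mx 0 j.

Definition int_to_real (R : realType) (n : nat) (x : 'rV[int]_n) : 'rV[R]_n :=
  map_mx (fun z : int => z%:~R) x.

Definition euclid_dist (R : realType) (n : nat) (x y : 'rV[R]_n) : R :=
  Num.sqrt (\sum_(i < n) (x 0 i - y 0 i) ^+ 2).

Definition ray (R : realType) (n : nat) (a : 'rV[R]_n) : 'rV[R]_n -> Prop :=
  fun p => exists2 t : R, 0 <= t & p = t *: a.

Definition within_dist (R : realType) (n : nat) (S : 'rV[R]_n -> Prop)
  (x : 'rV[R]_n) (r : R) : Prop :=
  exists2 p, S p & euclid_dist x p <= r.

From mathcomp Require Import all_boot all_order all_algebra.
From mathcomp Require Import reals.
From mathcomp Require Import lra.
Set Implicit Arguments.
Unset Strict Implicit.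
Unset Printing Implicit Defensive.
Import Order.TTheory GRing.Theory Num.Theory.
Local Open Scope ring_scope.

(* Walk greedily: from the lattice point y, increase the coordinate j for which
   the ray t a reaches the hyperplane x_j = y_j + 1 first, i.e. which minimises
   (y_j + 1) / a_j.  This keeps the walk "balanced": every y_i / a_i stays below
   every (y_j + 1) / a_j.  Taking t = max_i y_i / a_i, each coordinate of t a - y
   then lies in [0, 1], so y is within distance sqrt n of the ray. *)

Section BalancedWalk.
Variables (R : realFieldType) (n : nat) (a : 'rV[R]_n.+1).
Hypothesis a_gt0 : forall i, 0 < a 0 i.

Definition balanced (y : 'I_n.+1 -> nat) : Prop :=
  forall i j, (y i)%:R / a 0 i <= (y j).+1%:R / a 0 j.

Definition bump_at (y : 'I_n.+1 -> nat) (j : 'I_n.+1) : 'I_n.+1 -> nat :=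
  fun i => (y i + (i == j))%N.

Lemma balanced0 : balanced (fun=> 0%N).
Proof. by move=> i j; rewrite mul0r divr_ge0 ?ler0n ?ltW. Qed.

Lemma balanced_bump y j :
  balanced y ->
  (forall k, (y j).+1%:R / a 0 j <= (y k).+1%:R / a 0 k) ->
  balanced (bump_at y j).
Proof.
move=> bal_y j_min i k; rewrite /bump_at /=.
have succ_le (m : nat) l : m.+1%:R / a 0 l <= m.+2%:R / a 0 l.
  by rewrite ler_pM2r ?invr_gt0 // ler_nat.
case: (eqVneq i j) => [->|_]; case: (eqVneq k j) => [->|_] /=;
  rewrite ?addn1 ?addn0.
- exact: succ_le.
- exact: j_min.
- exact: le_trans (bal_y i j) (succ_le _ _).
- exact: bal_y.
Qed.

Definition greedy_dir (y : 'I_n.+1 -> nat) : 'I_n.+1 :=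
  [arg min_(j < ord0) ((y j).+1%:R / a 0 j : R)]%O.

Fixpoint greedy_walk (k : nat) : 'I_n.+1 -> nat :=
  if k is k.+1 then let y := greedy_walk k in bump_at y (greedy_dir y)
  else fun=> 0%N.

Lemma balanced_greedy_walk k : balanced (greedy_walk k).
Proof.
elim: k => [|k IHk] /=; first exact: balanced0.
apply: balanced_bump => //; rewrite /greedy_dir.
by case: arg_minP => // j _ j_min k'; apply: j_min.
Qed.

End BalancedWalk.

Lemma row_bump_at_sub n (y : 'I_n.+1 -> nat) j :
  is_std_basis (\row_i (bump_at y j i)%:Z - \row_i (y i)%:Z).
Proof.
exists j; apply/matrixP => u v; rewrite !mxE ord1 /bump_at PoszD addrAC subrr.
by rewrite add0r; case: (v == j).
Qed.

Lemma euclid_dist_le_sqrt (R : realType) n (x y : 'rV[R]_n) :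
  (forall i, `|x 0 i - y 0 i| <= 1) -> euclid_dist x y <= Num.sqrt n%:R.
Proof.
move=> dist_le1; rewrite /euclid_dist ler_sqrt ?ler0n //.
rewrite -[n in n%:R]card_ord -sumr_const ler_sum // => i _.
by rewrite -real_normK ?num_real // exprn_ile1.
Qed.

Lemma balanced_near_ray (R : realType) n (a : 'rV[R]_n.+1) y :
  (forall i, 0 < a 0 i) -> balanced a y ->
  within_dist (ray a) (int_to_real R (\row_i (y i)%:Z)) (Num.sqrt n.+1%:R).
Proof.
move=> a_gt0 bal_y.
pose m := [arg max_(j > ord0) ((y j)%:R / a 0 j : R)]%O.
have y_le_m i : (y i)%:R / a 0 i <= (y m)%:R / a 0 m.
  by rewrite /m; case: arg_maxP => // j _ j_max; apply: j_max.
set t := (y m)%:R / a 0 m.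
exists (t *: a); first by exists t; rewrite // divr_ge0 ?ler0n ?ltW.
apply: euclid_dist_le_sqrt => i; rewrite !mxE /=.
have lo : (y i)%:R <= t * a 0 i by rewrite -ler_pdivrMr.
have hi : t * a 0 i <= (y i).+1%:R by rewrite -ler_pdivlMr // bal_y.
rewrite -natr1 in hi; rewrite ler_norml; apply/andP; split; lra.
Qed.

Theorem proposition2p8 (R : realType) (n : nat) (a : 'rV[R]_n) :
  (1 <= n)%N ->
  (forall i : 'I_n, 0 < a 0 i) ->
  exists x : nat -> 'rV[int]_n,
    [/\ is_std_basis (x 0%N),
        (forall i : nat, is_std_basis (x i.+1 - x i)) &
        (forall i : nat,
           within_dist (ray a) (int_to_real R (x i)) (Num.sqrt (2 * n%:R)))].
Proof.
case: n a => [//|n] a _ a_gt0.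
pose lattice_walk k : 'rV[int]_n.+1 := \row_i (greedy_walk a k i)%:Z.
have walk0 : lattice_walk 0%N = 0 by apply/matrixP => u v; rewrite !mxE.
exists (fun k => lattice_walk k.+1); split.
- by rewrite -[lattice_walk 1%N]subr0 -walk0; apply: row_bump_at_sub.
- by move=> k; apply: row_bump_at_sub.
- move=> k; have [p ray_p p_near] :=
    balanced_near_ray a_gt0 (balanced_greedy_walk a_gt0 k.+1).
  exists p => //; apply: le_trans p_near _.
  by rewrite ler_sqrt ?mulr_ge0 ?ler0n // ler_peMl ?ler0n ?ler1n.
Qed.
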